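(* Let $\Gamma$ and $\mathcal{C}$ be regular conics in the real plane which have a common point of intersection of order higher than $2$ (intersection multiplicity $3$ or $4$). Then there are no closed polygonal lines inscribed in $\Gamma$ and circumscribed about $\mathcal{C}$.
   Context: A regular conic is a smooth curve given by a quadratic equation. A polygonal line $A_1A_2\dots$ is inscribed in $\Gamma$ and circumscribed about $\mathcal{C}$ if all vertices lie on $\Gamma$ and each side line $A_iA_{i+1}$ is tangent to $\mathcal{C}$, consecutive sides through $A_i$ being the two distinct tangent lines from $A_i$ to $\mathcal{C}$; it is closed if its vertex sequence is periodic. *)

From mathcomp Require Import all_boot all_order all_algebra.
From mathcomp Require Import reals.
Set Implicit Arguments.
Unset Strict Implicit.
Unset Printing Implicit Defensive.
Import Order.TTheory GRing.Theory Num.Theory.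
Local Open Scope ring_scope.

Section Conics.
Variable R : realType.

Definition point := (R * R)%type.

(* A quadratic equation  a x^2 + b x y + c y^2 + d x + e y + f = 0. *)
Record quadric := Quadric { qa : R; qb : R; qc : R; qd : R; qe : R; qf : R }.

Definition qeval (Q : quadric) (P : point) : R :=
  qa Q * P.1 ^+ 2 + qb Q * P.1 * P.2 + qc Q * P.2 ^+ 2
  + qd Q * P.1 + qe Q * P.2 + qf Q.

Definition on_conic (Q : quadric) (P : point) : Prop := qeval Q P = 0.

Definition qgrad (Q : quadric) (P : point) : point :=
  (2 * qa Q * P.1 + qb Q * P.2 + qd Q, qb Q * P.1 + 2 * qc Q * P.2 + qe Q).

(* determinant of the symmetric 3x3 matrix of the conic
   [[a, b/2, d/2], [b/2, c, e/2], [d/2, e/2, f]] *)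
Definition qdisc (Q : quadric) : R :=
  let a := qa Q in let b := qb Q / 2 in let c := qc Q in
  let d := qd Q / 2 in let e := qe Q / 2 in let f := qf Q in
  a * (c * f - e * e) - b * (b * f - e * d) + d * (b * e - c * d).

(* A regular conic: a nondegenerate quadratic equation whose real zero set is
   nonempty; this is exactly a smooth (real) curve given by a quadratic
   equation (ellipse, parabola or hyperbola). *)
Definition regular_conic (Q : quadric) : Prop :=
  qdisc Q != 0 /\ exists P : point, on_conic Q P.

Definition dot (u v : point) : R := u.1 * v.1 + u.2 * v.2.

Definition collinear (P X Y : point) : Prop :=
  (X.1 - P.1) * (Y.2 - P.2) - (X.2 - P.2) * (Y.1 - P.1) = 0.

Definition tangent_line (C : quadric) (X Y : point) : Prop :=
  X <> Y /\
  exists P : point, on_conic C P /\ collinear P X Y /\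
                    dot (qgrad C P) (Y.1 - X.1, Y.2 - X.2) = 0.

(* Intersection multiplicity of two conics at a common point P.
   Gamma is smooth at P; it is parametrised near P by the rational map
     gamma(t) = P - (N.d(t)) / q_Gamma(d(t)) * d(t),   d(t) = T + t N,
   where N = grad Gamma (P), T = (-N_2, N_1) is the tangent direction and
   q_Gamma is the quadratic part of Gamma (lines through P with direction
   d(t) meet Gamma a second time at gamma(t); gamma(0) = P, gamma'(0) <> 0).
   The intersection multiplicity of Gamma and C at P is the order of
   vanishing at t = 0 of  C(gamma(t)), i.e. of the polynomial
     q_Gamma(d)^2 * C(gamma(t))
       = C(P) q_Gamma(d)^2 - (grad C(P).d)(N.d) q_Gamma(d) + q_C(d) (N.d)^2,
   since q_Gamma(d(0)) = q_Gamma(T) <> 0. *)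

Definition qquad_poly (Q : quadric) (u v : {poly R}) : {poly R} :=
  qa Q *: (u * u) + qb Q *: (u * v) + qc Q *: (v * v).

Definition contact_poly (G C : quadric) (P : point) : {poly R} :=
  let N := qgrad G P in
  let du := (- N.2)%:P + N.1 *: 'X in
  let dv := N.1%:P + N.2 *: 'X in
  let Nd := N.1 *: du + N.2 *: dv in
  let gCd := (qgrad C P).1 *: du + (qgrad C P).2 *: dv in
  let qG := qquad_poly G du dv in
  qeval C P *: (qG * qG) - gCd * Nd * qG + qquad_poly C du dv * (Nd * Nd).

(* intersection multiplicity (meaningful when it is finite, i.e. when the
   contact polynomial is nonzero) *)
Definition int_mult (G C : quadric) (P : point) : nat :=
  mup 0 (contact_poly G C P).

(* A polygonal line A_0 A_1 A_2 ... inscribed in Gamma and circumscribed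
   about C: all vertices lie on Gamma, each side line A_i A_{i+1} is tangent
   to C, and the two sides through A_i (i >= 1) are distinct lines (hence
   they are the two distinct tangent lines from A_i to C). *)
Definition inscribed_circumscribed (G C : quadric) (A : nat -> point) : Prop :=
  (forall i, on_conic G (A i)) /\
  (forall i, tangent_line C (A i) (A i.+1)) /\
  (forall i, ~ collinear (A i.+2) (A i) (A i.+1)).

Definition closed_polygon (A : nat -> point) : Prop :=
  exists n : nat, (0 < n)%N /\ forall i, A (i + n)%N = A i.

End Conics.

From mathcomp Require Import all_boot all_order all_algebra.
From mathcomp Require Import reals ring lra.
Set Implicit Arguments.
Unset Strict Implicit.
Unset Printing Implicit Defensive.
Import Order.TTheory GRing.Theory Num.Theory.
Local Open Scope ring_scope.

(* Move P to the origin and the tangent to G at P onto the x-axis.  A point of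
   G other than P is then determined by the parameter t = x / y of the line
   through P on which it lies, and, via the dual conic of C, the tangency to C
   of the chord joining the points with parameters s and t becomes a
   polynomial equation F(s, t) = 0.  Contact of order at least three means
   that C osculates G at P; this makes F(x, y) - F(z, y) equal to (x - z)
   times an affine function of x + z - 2 y, so the parameters of the vertices
   of an inscribed-circumscribed polygonal line have a constant second
   difference.  Such a sequence is periodic only if it is constant, whereas
   consecutive vertices are distinct. *)

Section PeriodicSequences.
Variable R : numDomainType.

Lemma periodic_const_increment (y : nat -> R) (c : R) (n : nat) : (0 < n)%N ->
  (forall i, y i.+1 - y i = c) -> y n = y 0%N -> c = 0.
Proof.
move=> n_gt0 incr per.
have : c *+ n = 0.
  rewrite -(subn0 n) -sumr_const_nat -(eq_bigr _ (fun i _ => incr i)).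
  by rewrite telescope_sumr // per subrr.
by move/eqP; rewrite mulrn_eq0 eqn0Ngt n_gt0 => /eqP.
Qed.

Lemma periodic_const_second_difference (x : nat -> R) (k : R) (n : nat) : (0 < n)%N ->
  (forall i, x i.+2 - 2 * x i.+1 + x i = k) -> (forall i, x (i + n)%N = x i) ->
  x 1%N = x 0%N.
Proof.
move=> n_gt0 second per.
pose d i := x i.+1 - x i.
have incr_d i : d i.+1 - d i = k by rewrite -(second i) /d; ring.
have k0 : k = 0.
  by apply: (periodic_const_increment n_gt0 incr_d); rewrite /d -add1n per -{1}(add0n n) per.
have const_d i : d i = d 0%N.
  by elim: i => // i IH; rewrite -IH; apply/eqP; rewrite -subr_eq0 incr_d k0.
apply/eqP; rewrite -subr_eq0; apply/eqP.
by apply: (periodic_const_increment n_gt0 const_d); rewrite -{1}(add0n n) per.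
Qed.

End PeriodicSequences.

Lemma coef_lt_mup0 (F : fieldType) (p : {poly F}) (i : nat) :
  p != 0 -> (i < mup 0 p)%N -> p`_i = 0.
Proof.
move=> p_nz lt_i; have : ('X - 0%:P) ^+ mup 0 p %| p by rewrite -mup_geq.
by rewrite subr0 => /dvdpP[q ->]; rewrite coefMXn lt_i.
Qed.

Section Frame.
Variable R : realType.
Implicit Types (Q : quadric R) (N P Z A B : point R).

Definition perp N : point R := (- N.2, N.1).
Definition norm2 N : R := dot N N.

(* Coordinates of Z in the orthogonal frame at P with axes [perp N] and [N],
   multiplied by [norm2 N] so that no division occurs. *)
Definition frame_coords N P Z : point R :=
  (dot (perp N) (Z.1 - P.1, Z.2 - P.2), dot N (Z.1 - P.1, Z.2 - P.2)).

Definition frame_quadric Q N P : quadric R :=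
  let T := perp N in
  Quadric (qa Q * T.1 ^+ 2 + qb Q * T.1 * T.2 + qc Q * T.2 ^+ 2)
    (2 * qa Q * T.1 * N.1 + qb Q * (T.1 * N.2 + T.2 * N.1) + 2 * qc Q * T.2 * N.2)
    (qa Q * N.1 ^+ 2 + qb Q * N.1 * N.2 + qc Q * N.2 ^+ 2)
    (norm2 N * dot (qgrad Q P) T) (norm2 N * dot (qgrad Q P) N)
    (norm2 N ^+ 2 * qeval Q P).

Lemma frame_qeval Q N P Z :
  qeval (frame_quadric Q N P) (frame_coords N P Z) = norm2 N ^+ 2 * qeval Q Z.
Proof. rewrite /frame_quadric /frame_coords /norm2 /dot /qgrad /perp /qeval /=; ring. Qed.

Lemma frame_qgrad Q N P Z A B :
  let fc := frame_coords N P in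
  dot (qgrad (frame_quadric Q N P) (fc Z)) ((fc B).1 - (fc A).1, (fc B).2 - (fc A).2)
  = norm2 N ^+ 2 * dot (qgrad Q Z) (B.1 - A.1, B.2 - A.2).
Proof. rewrite /frame_quadric /frame_coords /norm2 /dot /qgrad /perp /=; ring. Qed.

Lemma frame_qdisc Q N P : qdisc (frame_quadric Q N P) = norm2 N ^+ 4 * qdisc Q.
Proof. rewrite /qdisc /frame_quadric /norm2 /dot /qgrad /perp /qeval /=; by field. Qed.

Lemma frame_qf Q N P : on_conic Q P -> qf (frame_quadric Q N P) = 0.
Proof. by rewrite /on_conic /= => ->; rewrite mulr0. Qed.

Lemma frame_qd_qgrad Q P : qd (frame_quadric Q (qgrad Q P) P) = 0.
Proof. rewrite /frame_quadric /dot /perp /=; ring. Qed.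

Lemma frame_collinear N P Z A B : norm2 N != 0 ->
  let fc := frame_coords N P in collinear (fc Z) (fc A) (fc B) <-> collinear Z A B.
Proof.
move=> N_nz fc; rewrite /collinear.
have -> : ((fc A).1 - (fc Z).1) * ((fc B).2 - (fc Z).2)
          - ((fc A).2 - (fc Z).2) * ((fc B).1 - (fc Z).1)
        = - norm2 N * ((A.1 - Z.1) * (B.2 - Z.2) - (A.2 - Z.2) * (B.1 - Z.1)).
  by rewrite /fc /frame_coords /norm2 /dot /perp /=; ring.
split=> [/eqP|->]; last by rewrite mulr0.
by rewrite mulf_eq0 oppr_eq0 (negbTE N_nz) => /eqP.
Qed.

Lemma frame_coords_inj N P : norm2 N != 0 -> injective (frame_coords N P).
Proof.
move=> N_nz [x1 y1] [x2 y2] [eT eN].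
have dN : dot N (x1 - x2, y1 - y2) = 0.
  by move: eN; rewrite /dot /= => /eqP; rewrite -subr_eq0 => /eqP <-; ring.
have dT : dot (perp N) (x1 - x2, y1 - y2) = 0.
  by move: eT; rewrite /dot /= => /eqP; rewrite -subr_eq0 => /eqP <-; ring.
have ex : norm2 N * (x1 - x2)
          = N.1 * dot N (x1 - x2, y1 - y2) - N.2 * dot (perp N) (x1 - x2, y1 - y2).
  by rewrite /norm2 /dot /perp /=; ring.
have ey : norm2 N * (y1 - y2)
          = N.2 * dot N (x1 - x2, y1 - y2) + N.1 * dot (perp N) (x1 - x2, y1 - y2).
  by rewrite /norm2 /dot /perp /=; ring.
rewrite dN dT !mulr0 subr0 addr0 in ex ey.
by move: ex ey => /eqP + /eqP; rewrite !mulf_eq0 (negbTE N_nz) !subr_eq0 => /eqP-> /eqP->.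
Qed.

Lemma tangent_line_frame Q N P A B : norm2 N != 0 -> tangent_line Q A B ->
  tangent_line (frame_quadric Q N P) (frame_coords N P A) (frame_coords N P B).
Proof.
move=> N_nz [AB_neq [Z [onZ [colZ gradZ]]]].
split; first exact: contra_not (@frame_coords_inj N P N_nz A B) AB_neq.
exists (frame_coords N P Z); split; first by rewrite /on_conic frame_qeval onZ mulr0.
by split; [apply/frame_collinear | rewrite frame_qgrad gradZ mulr0].
Qed.

Lemma inscribed_circumscribed_frame G C N P (A : nat -> point R) : norm2 N != 0 ->
  inscribed_circumscribed G C A ->
  inscribed_circumscribed (frame_quadric G N P) (frame_quadric C N P) (frame_coords N P \o A).
Proof.
move=> N_nz [onG [tanC noncol]]; split=> [i|]; first by rewrite /on_conic frame_qeval onG mulr0.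
by split=> i; [exact: tangent_line_frame | rewrite /= frame_collinear].
Qed.

End Frame.

Section DualConic.
Variable R : realType.
Implicit Types (Q : quadric R) (Z A B : point R).

(* [l^T adj(M) l] for the symmetric matrix [M] of [Q] whose determinant is
   [qdisc Q]: the equation of the conic dual to [Q] in line coordinates. *)
Definition dual_quad Q (l1 l2 l3 : R) : R :=
  (qc Q * qf Q - qe Q ^+ 2 / 4) * l1 ^+ 2 + (qa Q * qf Q - qd Q ^+ 2 / 4) * l2 ^+ 2
  + (qa Q * qc Q - qb Q ^+ 2 / 4) * l3 ^+ 2
  + 2 * (qd Q * qe Q / 4 - qb Q * qf Q / 2) * l1 * l2
  + 2 * (qb Q * qe Q / 4 - qc Q * qd Q / 2) * l1 * l3
  + 2 * (qb Q * qd Q / 4 - qa Q * qe Q / 2) * l2 * l3.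

(* The line AB is [(A.2 - B.2) x + (B.1 - A.1) y + (A.1 B.2 - A.2 B.1) = 0]. *)
Definition line_dual Q A B : R :=
  dual_quad Q (A.2 - B.2) (B.1 - A.1) (A.1 * B.2 - A.2 * B.1).

(* The coordinates of [M (Z.1, Z.2, 1)^T], i.e. of the polar line of [Z]. *)
Definition polar1 Q Z : R := qa Q * Z.1 + qb Q / 2 * Z.2 + qd Q / 2.
Definition polar2 Q Z : R := qb Q / 2 * Z.1 + qc Q * Z.2 + qe Q / 2.
Definition polar3 Q Z : R := qd Q / 2 * Z.1 + qe Q / 2 * Z.2 + qf Q.

Lemma dual_quad_scale Q k l1 l2 l3 :
  dual_quad Q (k * l1) (k * l2) (k * l3) = k ^+ 2 * dual_quad Q l1 l2 l3.
Proof. rewrite /dual_quad; ring. Qed.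

Lemma dual_quad_polar Q Z :
  dual_quad Q (polar1 Q Z) (polar2 Q Z) (polar3 Q Z) = qdisc Q * qeval Q Z.
Proof. rewrite /dual_quad /polar1 /polar2 /polar3 /qdisc /qeval /=; by field. Qed.

Lemma polar_adj_row3 Q Z :
  (qb Q * qe Q / 4 - qc Q * qd Q / 2) * polar1 Q Z
  + (qb Q * qd Q / 4 - qa Q * qe Q / 2) * polar2 Q Z
  + (qa Q * qc Q - qb Q ^+ 2 / 4) * polar3 Q Z = qdisc Q.
Proof. rewrite /polar1 /polar2 /polar3 /qdisc /=; by field. Qed.

Lemma polar3_on_conic Q Z : on_conic Q Z ->
  polar3 Q Z = - (Z.1 * polar1 Q Z + Z.2 * polar2 Q Z).
Proof.
move=> onZ; apply/eqP; rewrite -subr_eq0 -[X in _ == X]onZ; apply/eqP.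
by rewrite /polar1 /polar2 /polar3 /qeval; field.
Qed.

Lemma polar12_neq0 Q Z : qdisc Q != 0 -> on_conic Q Z ->
  (polar1 Q Z != 0) || (polar2 Q Z != 0).
Proof.
move=> disc_nz onZ; apply: contraNT disc_nz; rewrite negb_or !negbK => /andP[/eqP p1 /eqP p2].
by rewrite -(polar_adj_row3 Q Z) (polar3_on_conic onZ) p1 p2 !(mulr0, addr0, oppr0).
Qed.

Lemma qgrad_polar Q Z : qgrad Q Z = (2 * polar1 Q Z, 2 * polar2 Q Z).
Proof. by rewrite /qgrad /polar1 /polar2; congr pair; field. Qed.

Lemma norm2_qgrad_neq0 Q Z : qdisc Q != 0 -> on_conic Q Z -> norm2 (qgrad Q Z) != 0.
Proof.
move=> disc_nz onZ; rewrite qgrad_polar /norm2 /dot /= -!expr2 paddr_eq0 ?sqr_ge0 //.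
by rewrite !sqrf_eq0 !mulf_eq0 pnatr_eq0 /= negb_and polar12_neq0.
Qed.

Lemma tangent_line_dual Q A B : qdisc Q != 0 -> tangent_line Q A B -> line_dual Q A B = 0.
Proof.
(* The line coordinates [l] are proportional to the polar [m] of the point of
   tangency, and [m] satisfies the dual equation. *)
move=> disc_nz [_ [Z [onZ [colZ gradZ]]]]; rewrite /line_dual.
set l1 := A.2 - B.2; set l2 := B.1 - A.1; set l3 := A.1 * B.2 - A.2 * B.1.
set m1 := polar1 Q Z; set m2 := polar2 Q Z; set m3 := polar3 Q Z.
have e12 : m1 * l2 = l1 * m2.
  apply/eqP; rewrite -subr_eq0; apply/eqP.
  by rewrite -[RHS](mulr0 2^-1) -gradZ qgrad_polar /dot /= -/m1 -/m2 /l1 /l2; field.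
have l3E : l3 = - (Z.1 * l1 + Z.2 * l2).
  apply/eqP; rewrite -subr_eq0 -[X in _ == X]colZ /collinear; apply/eqP.
  by rewrite /l1 /l2 /l3; ring.
have m3E : m3 = - (Z.1 * m1 + Z.2 * m2) := polar3_on_conic onZ.
have e21 : m2 * l1 = l2 * m1 by rewrite mulrC -e12 mulrC.
have e13 : m1 * l3 = l1 * m3.
  have -> : m1 * l3 = - (Z.1 * (l1 * m1) + Z.2 * (m1 * l2)) by rewrite l3E; ring.
  by rewrite e12 m3E; ring.
have e23 : m2 * l3 = l2 * m3.
  have -> : m2 * l3 = - (Z.1 * (m2 * l1) + Z.2 * (l2 * m2)) by rewrite l3E; ring.
  by rewrite e21 m3E; ring.
have dual_m : dual_quad Q m1 m2 m3 = 0 by rewrite dual_quad_polar onZ mulr0.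
case/orP: (polar12_neq0 disc_nz onZ) => [m1_nz | m2_nz].
  apply: (mulfI (expf_neq0 2 m1_nz)).
  by rewrite mulr0 -dual_quad_scale [m1 * l1]mulrC e12 e13 dual_quad_scale dual_m mulr0.
apply: (mulfI (expf_neq0 2 m2_nz)).
by rewrite mulr0 -dual_quad_scale e21 [m2 * l2]mulrC e23 dual_quad_scale dual_m mulr0.
Qed.

Lemma line_dual_sym Q A B : line_dual Q B A = line_dual Q A B.
Proof. rewrite /line_dual /dual_quad; ring. Qed.

End DualConic.

Section ContactOrder.
Variables (R : realType) (G C : quadric R) (P : point R).
Local Notation G' := (frame_quadric G (qgrad G P) P).
Local Notation C' := (frame_quadric C (qgrad G P) P).

Lemma contact_poly_frame : on_conic C P ->
  contact_poly G C P = 'X^2 * (qe G' *: qquad_poly C' 1 'X - qe C' *: qquad_poly G' 1 'X)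
                       - 'X * (qd C' *: qquad_poly G' 1 'X).
Proof.
move=> onP; rewrite /contact_poly onP scale0r add0r.
rewrite /qquad_poly /frame_quadric /norm2 /dot /perp /= -!mul_polyC; ring.
Qed.

Lemma contact_order_gt2_frame : on_conic C P -> qa G' != 0 ->
  contact_poly G C P != 0 -> (2 < int_mult G C P)%N ->
  qd C' = 0 /\ qa C' * qe G' = qa G' * qe C'.
Proof.
move=> onP aG'_nz cp_nz mult_gt2.
have := coef_lt_mup0 cp_nz (ltnW mult_gt2); have := coef_lt_mup0 cp_nz mult_gt2.
rewrite contact_poly_frame //.
move: (frame_quadric G _ P) (frame_quadric C _ P) aG'_nz => g c ag_nz.
rewrite /qquad_poly !coefE /= !(mul1r, mulr1, mul0r, mulr0, addr0, add0r) => c2 /eqP.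
rewrite oppr_eq0 mulf_eq0 (negbTE ag_nz) orbF => /eqP dc.
by split=> //; move: c2; rewrite dc; lra.
Qed.

End ContactOrder.

Lemma normal_coefs_neq0 (R : realType) (Q : quadric R) :
  qd Q = 0 -> qf Q = 0 -> qdisc Q != 0 -> qa Q != 0 /\ qe Q != 0.
Proof.
move=> dQ fQ; have -> : qdisc Q = - (qa Q * qe Q ^+ 2 / 4) by rewrite /qdisc dQ fQ /=; field.
by rewrite oppr_eq0 !mulf_eq0 !negb_or => /andP[/and3P[-> ->]].
Qed.

Section NormalPosition.
Variable R : realType.

Definition qdir (Q : quadric R) (t : R) : R := qa Q * t ^+ 2 + qb Q * t + qc Q.

(* When qd G = qf G = 0, the line x = t y meets [G] at the origin and at
   y = - qe G / qdir G t, and the chord joining the points with parameters x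
   and y has line coordinates proportional to the arguments of [dual_quad]. *)
Definition chord_dual (G C : quadric R) (x y : R) : R :=
  dual_quad C (qa G * (x + y) + qb G) (qc G - qa G * x * y) (qe G).

(* [G] and [C] pass through the origin with the common tangent y = 0 and, by
   [osculating], with the same curvature -2 qa / qe there. *)
Variables G C : quadric R.
Hypotheses (dG : qd G = 0) (fG : qf G = 0) (dC : qd C = 0) (fC : qf C = 0).
Hypotheses (discG : qdisc G != 0) (discC : qdisc C != 0).
Hypothesis osculating : qa C * qe G = qa G * qe C.
Implicit Types (Z A B : point R).

Let aG : qa G != 0 := (normal_coefs_neq0 dG fG discG).1.
Let eG : qe G != 0 := (normal_coefs_neq0 dG fG discG).2.
Let eC : qe C != 0 := (normal_coefs_neq0 dC fC discC).2.

Lemma on_normal_axis Z : on_conic G Z -> Z.2 = 0 -> Z = (0, 0).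
Proof.
case: Z => [x y] /= onZ y0; rewrite y0 in onZ *.
have : qa G * x ^+ 2 = 0 by rewrite -onZ /qeval dG fG /=; ring.
by move/eqP; rewrite mulf_eq0 (negbTE aG) expf_eq0 /= => /eqP->.
Qed.

Lemma on_normal_param Z : on_conic G Z -> Z.2 != 0 ->
  qe G + Z.2 * qdir G (Z.1 / Z.2) = 0.
Proof.
case: Z => [x y] /= onZ y_nz.
have : y * (qe G + y * qdir G (x / y)) = 0 by rewrite -onZ /qeval /qdir dG fG /=; field.
by move/eqP; rewrite mulf_eq0 (negbTE y_nz) => /eqP.
Qed.

Lemma normal_param_inj A B : on_conic G A -> on_conic G B -> A.2 != 0 -> B.2 != 0 ->
  A.1 / A.2 = B.1 / B.2 -> A = B.
Proof.
move=> onA onB vA vB eq_param.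
have pA := on_normal_param onA vA; have pB := on_normal_param onB vB.
rewrite eq_param in pA.
have q_nz : qdir G (B.1 / B.2) != 0.
  by apply: contraNneq eG => q0; rewrite -pB q0 mulr0 addr0.
have e2 : A.2 = B.2 by apply: (mulIf q_nz); apply: (addrI (qe G)); rewrite pA pB.
apply: injective_projections => //.
by rewrite -[A.1](divfK vA) eq_param e2 divfK.
Qed.

Lemma line_dual_chord A B : on_conic G A -> on_conic G B -> A.2 != 0 -> B.2 != 0 ->
  A <> B -> line_dual C A B = 0 -> chord_dual G C (A.1 / A.2) (B.1 / B.2) = 0.
Proof.
move=> onA onB vA vB AB_neq dualAB.
have xy_nz : A.1 / A.2 - B.1 / B.2 != 0.
  by rewrite subr_eq0; apply/eqP => /(normal_param_inj onA onB vA vB).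
have pA := on_normal_param onA vA; have pB := on_normal_param onB vB.
have A1 : A.1 = A.1 / A.2 * A.2 by rewrite divfK.
have B1 : B.1 = B.1 / B.2 * B.2 by rewrite divfK.
move: (A.1 / A.2) (B.1 / B.2) A1 B1 pA pB xy_nz => x y A1 B1 pA pB xy_nz.
set k := A.2 * B.2 * (x - y).
have c1 : qe G * (A.2 - B.2) = k * (qa G * (x + y) + qb G).
  apply/eqP; rewrite -subr_eq0; apply/eqP.
  have -> : qe G * (A.2 - B.2) - k * (qa G * (x + y) + qb G)
    = A.2 * (qe G + B.2 * qdir G y) - B.2 * (qe G + A.2 * qdir G x) by rewrite /k /qdir; ring.
  by rewrite pA pB !mulr0 subrr.
have c2 : qe G * (B.1 - A.1) = k * (qc G - qa G * x * y).
  apply/eqP; rewrite -subr_eq0; apply/eqP.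
  have -> : qe G * (B.1 - A.1) - k * (qc G - qa G * x * y)
    = y * B.2 * (qe G + A.2 * qdir G x) - x * A.2 * (qe G + B.2 * qdir G y).
    by rewrite /k /qdir A1 B1; ring.
  by rewrite pA pB !mulr0 subrr.
have c3 : qe G * (A.1 * B.2 - A.2 * B.1) = k * qe G by rewrite /k A1 B1; ring.
have : qe G ^+ 2 * line_dual C A B = k ^+ 2 * chord_dual G C x y.
  by rewrite /line_dual -dual_quad_scale c1 c2 c3 dual_quad_scale.
rewrite dualAB mulr0 => /esym/eqP.
by rewrite mulf_eq0 expf_eq0 /= /k !mulf_eq0 (negbTE vA) (negbTE vB) (negbTE xy_nz) => /eqP.
Qed.

Lemma line_dual_off_axis A B : on_conic G A -> on_conic G B -> A <> B ->
  line_dual C A B = 0 -> A.2 != 0.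
Proof.
move=> onA onB AB_neq dualAB; apply/eqP => vA.
have A0 := on_normal_axis onA vA.
have : qe C ^+ 2 / 4 * B.2 ^+ 2 = 0.
  apply/eqP; rewrite -oppr_eq0 -[X in _ == X]dualAB A0 /line_dual /dual_quad dC fC /=.
  by apply/eqP; ring.
move/eqP; rewrite !mulf_eq0 (negbTE eC) invr_eq0 pnatr_eq0 /= orbb => /eqP vB.
by apply: AB_neq; rewrite A0 (on_normal_axis onB vB).
Qed.

Definition param_drift : R := 2 * (qb C * qe G - qe C * qb G) / (qa G * qe C).

Lemma chord_dual_step x y z : chord_dual G C x y = 0 -> chord_dual G C z y = 0 ->
  x != z -> x + z - 2 * y = param_drift.
Proof.
move=> dual_xy dual_zy xz_neq.
have aCE : qa C = qa G * qe C / qe G by rewrite -osculating mulfK.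
(* After eliminating [qa C], the difference is [x - z] times a function of
   [x + z - 2 y] alone. *)
have : (x - z) * (qa G * qe C / 4)
         * (2 * (qb C * qe G - qe C * qb G) - qa G * qe C * (x + z - 2 * y)) = 0.
  rewrite -[RHS](subrr 0) -{1}dual_xy -dual_zy /chord_dual /dual_quad dC fC aCE.
  by field.
move/eqP; rewrite !mulf_eq0 subr_eq0 (negbTE xz_neq) (negbTE aG) (negbTE eC).
rewrite invr_eq0 pnatr_eq0 /=.
rewrite subr_eq0 => /eqP drift.
by rewrite /param_drift drift; field; rewrite eC aG.
Qed.

Theorem normal_no_closed_polygon :
  ~ exists W : nat -> point R, inscribed_circumscribed G C W /\ closed_polygon W.
Proof.
move=> [W [[onW [tanW noncolW]] [n [n_gt0 perW]]]].
have dualW i : line_dual C (W i) (W i.+1) = 0 := tangent_line_dual discC (tanW i).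
have neqW i : W i <> W i.+1 := (tanW i).1.
have offW i : (W i).2 != 0 := line_dual_off_axis (onW i) (onW i.+1) (neqW i) (dualW i).
pose x i := (W i).1 / (W i).2.
have x_inj i j : x i = x j -> W i = W j := normal_param_inj (onW i) (onW j) (offW i) (offW j).
have step i : x i.+2 - 2 * x i.+1 + x i = param_drift.
  rewrite -(chord_dual_step (x := x i) (y := x i.+1) (z := x i.+2)).
  - by ring.
  - exact: line_dual_chord.
  - by apply: line_dual_chord => //; [move/esym/neqW | rewrite line_dual_sym].
  apply/eqP => /x_inj Wi_eq; apply: (noncolW i).
  by rewrite -Wi_eq /collinear; ring.
apply: (neqW 0%N); apply: x_inj; symmetry.
by apply: (periodic_const_second_difference n_gt0 step) => i; rewrite /x perW.
Qed.

End NormalPosition.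

Theorem proposition2p13 (R : realType) (G C : quadric R) (P : point R) :
  regular_conic G -> regular_conic C ->
  on_conic G P -> on_conic C P ->
  contact_poly G C P != 0%R ->
  (2 < int_mult G C P <= 4)%N ->
  ~ (exists A : nat -> point R,
        inscribed_circumscribed G C A /\ closed_polygon A).
Proof.
move=> [discG _] [discC _] onGP onCP contact_nz /andP[mult_gt2 _].
have N_nz : norm2 (qgrad G P) != 0 := norm2_qgrad_neq0 discG onGP.
have frame_disc Q : qdisc Q != 0 -> qdisc (frame_quadric Q (qgrad G P) P) != 0.
  by move=> disc_nz; rewrite frame_qdisc mulf_neq0 ?expf_neq0.
have dG := frame_qd_qgrad G P; have fG := frame_qf (qgrad G P) onGP.
have fC := frame_qf (qgrad G P) onCP.
have [aG _] := normal_coefs_neq0 dG fG (frame_disc G discG).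
have [dC osculating] := contact_order_gt2_frame onCP aG contact_nz mult_gt2.
move=> [A [inscA [n [n_gt0 perA]]]].
apply: (normal_no_closed_polygon dG fG dC fC (frame_disc G discG) (frame_disc C discC)
          osculating).
exists (frame_coords (qgrad G P) P \o A); split; first exact: inscribed_circumscribed_frame.
by exists n; split=> // i /=; rewrite perA.
Qed.
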